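(* Let $(X,\mu)$ be an irreducible discrete-time BRW with independent diffusion, with diffusion matrix $P$ the transition matrix of a recurrent random walk on $X$ and $\rho_x=\rho$ for all $x\in X$. If there is global survival starting from some $x\in X$, then $q(w,y)=\bar q(w)<1$ for all $w,y\in X$ (strong local survival at every $y$ starting from every $w$).
   Context: $S_X:=\{f:X\to\mathbb N:\sum_yf(y)<\infty\}$, $X$ countable. A BRW with independent diffusion is given by offspring laws $\rho_x$ on $\mathbb N$ and a stochastic matrix $P=(p(x,y))$: $\mu_x(f)=\rho_x(\sum_yf(y))\frac{(\sum_yf(y))!}{\prod_yf(y)!}\prod_yp(x,y)^{f(y)}$, i.e. each particle at $x$ is replaced by a random number of children with law $\rho_x$, placed independently according to $p(x,\cdot)$. First moments $m_{xy}=p(x,y)\bar\rho_x$, $\bar\rho_x$ the mean of $\rho_x$; irreducible means every $y$ is reachable from every $x$ via a path with $m_{x_ix_{i+1}}>0$. Standing assumption: in every class of mutually reachable vertices there is a vertex at which a particle has, with positive probability, a number of children inside the class different from one. Global survival from $x$: with positive probability particles exist at every generation starting from one particle at $x$; $\bar q(x)$ is the probability of eventual total extinction and $q(w,y)$ the probability, starting from one particle at $w$, that eventually no particle is at $y$. *)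

From Stdlib Require Import Reals Lra ClassicalEpsilon Relations.
Open Scope R_scope.
Set Implicit Arguments.

Record countable (X : Type) := Countable {
  code : X -> nat;
  decode : nat -> option X;
  decode_code : forall x, decode (code x) = Some x;
  code_decode : forall n x, decode n = Some x -> code x = n }.

Definition eqX {X} (c : countable X) (x y : X) : bool := Nat.eqb (code c x) (code c y).

(** Total value of a series: its sum if it converges, 0 otherwise.
    (All series used below have nonnegative terms and bounded partial sums.) *)
Definition tsum (a : nat -> R) : R :=
  match excluded_middle_informative (exists l, infinite_sum a l) with
  | left H => proj1_sig (constructive_indefinite_description _ H)
  | right _ => 0
  end.

Definition seqX {X} (c : countable X) (f : X -> R) (n : nat) : R :=
  match decode c n with Some x => f x | None => 0 end.
Definition sumX {X} (c : countable X) (f : X -> R) : R := tsum (seqX c f).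
Definition sumX_is {X} (c : countable X) (f : X -> R) (l : R) : Prop :=
  infinite_sum (seqX c f) l.

Definition stochastic {X} (c : countable X) (p : X -> X -> R) : Prop :=
  (forall x y, 0 <= p x y) /\ (forall x, sumX_is c (p x) 1).
Definition prob_nat (rho : nat -> R) : Prop :=
  (forall k, 0 <= rho k) /\ infinite_sum rho 1.

Fixpoint pn {X} (c : countable X) (p : X -> X -> R) (n : nat) (x y : X) : R :=
  match n with
  | O => if eqX c x y then 1 else 0
  | S n' => sumX c (fun w => p x w * pn c p n' w y)
  end.
Definition recurrent {X} (c : countable X) (p : X -> X -> R) : Prop :=
  forall x, ~ (exists l, infinite_sum (fun n => pn c p n x x) l).

(** First moments m_{xy} = p(x,y) * mean(rho): m_{xy} > 0 iff p(x,y) > 0 and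
    rho charges some k >= 1 (the mean may be infinite). *)
Definition m_pos {X} (rho : nat -> R) (p : X -> X -> R) (x y : X) : Prop :=
  0 < p x y /\ exists k, (1 <= k)%nat /\ 0 < rho k.
Definition irreducible {X} (rho : nat -> R) (p : X -> X -> R) : Prop :=
  forall x y, clos_refl_trans X (m_pos rho p) x y.

(** Generating function of the BRW with independent diffusion, rho_x = rho:
    G(z)(x) = sum_f mu_x(f) prod_y z(y)^{f(y)}
            = sum_k rho(k) (sum_w p(x,w) z(w))^k. *)
Definition Gen {X} (c : countable X) (rho : nat -> R) (p : X -> X -> R)
  (z : X -> R) (x : X) : R :=
  tsum (fun k => rho k * (sumX c (fun w => p x w * z w)) ^ k).

(** v n x = probability, starting from one particle at x, that there are no
    particles at generation n. *)
Fixpoint ext_by {X} (c : countable X) (rho : nat -> R) (p : X -> X -> R)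
  (n : nat) : X -> R :=
  match n with
  | O => fun _ => 0
  | S n' => Gen c rho p (ext_by c rho p n')
  end.

(** u y N n x = probability, starting from one particle at x, that there is
    no particle at y in any generation k with N <= k <= n. *)
Fixpoint avoid {X} (c : countable X) (rho : nat -> R) (p : X -> X -> R)
  (y : X) (N n : nat) : X -> R :=
  match n with
  | O => match N with
         | O => fun x => if eqX c x y then 0 else 1
         | S _ => fun _ => 1
         end
  | S n' => match N with
            | O => fun x => (if eqX c x y then 0 else 1) * Gen c rho p (avoid c rho p y O n') x
            | S N' => Gen c rho p (avoid c rho p y N' n')
            end
  end.

(** qbar(x) = L : probability of eventual global extinction
    = lim_n P(no particles at generation n). *)
Definition is_qbar {X} (c : countable X) (rho : nat -> R) (p : X -> X -> R)
  (x : X) (L : R) : Prop :=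
  Un_cv (fun n => ext_by c rho p n x) L.

(** q(w,y) = L : probability that eventually no particle is at y
    = lim_N lim_n P(no particle at y in generations N..n). *)
Definition is_q {X} (c : countable X) (rho : nat -> R) (p : X -> X -> R)
  (w y : X) (L : R) : Prop :=
  exists l : nat -> R,
    (forall N, Un_cv (fun n => avoid c rho p y N n w) (l N)) /\ Un_cv l L.

Definition global_survival {X} (c : countable X) (rho : nat -> R) (p : X -> X -> R)
  (x : X) : Prop :=
  exists L, is_qbar c rho p x L /\ L < 1.

(* Since rho does not depend on the site and P is stochastic, the probability v_n of
   extinction by generation n is the same at every site, v_(n+1) = phi(v_n) with phi the
   generating function of rho; hence qbar is the constant L = lim v_n.  The probability
   that no particle is at y in generations N..n lies between v_N and
   v_n + (1 - v_n) a_(N,n)(x), where a_(N,n)(x) is the probability that a single P-walk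
   from x avoids y at times N..n; the upper bound is the convexity inequality
   phi((1 - t) v + t) <= (1 - t) phi(v) + t.  Recurrence gives a_(N,n) -> 0 as n -> oo:
   decomposing at the last visit to y shows e_n * sum_(k<=n) p^(k)(y,y) <= 1 for the
   probability e_n that the walk from y does not return by time n, and irreducibility
   propagates the decay from y to every site.  Letting n and then N tend to infinity
   squeezes q(w,y) to L. *)

From Stdlib Require Import Reals Relations Lra Lia Classical ClassicalEpsilon FunctionalExtensionality.
Open Scope R_scope.

Lemma tsum_infinite_sum (a : nat -> R) l : infinite_sum a l -> tsum a = l.
Proof.
  intro H. unfold tsum. destruct excluded_middle_informative as [e|e].
  - destruct (constructive_indefinite_description _ e) as [l' Hl']; simpl.
    exact (uniqueness_sum a l' l Hl' H).
  - exfalso. apply e. eauto.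
Qed.

Lemma infinite_sum_ext (a b : nat -> R) l :
  (forall n, a n = b n) -> infinite_sum a l -> infinite_sum b l.
Proof.
  intros E H. apply (Un_cv_ext (sum_f_R0 a)); auto.
  intro n. apply sum_eq. auto.
Qed.

Lemma infinite_sum_plus (a b : nat -> R) la lb :
  infinite_sum a la -> infinite_sum b lb -> infinite_sum (fun n => a n + b n) (la + lb).
Proof.
  intros Ha Hb. apply (Un_cv_ext (fun n => sum_f_R0 a n + sum_f_R0 b n)).
  - intro n. symmetry. apply plus_sum.
  - exact (CV_plus _ _ _ _ Ha Hb).
Qed.

Lemma Un_cv_const (a : R) : Un_cv (fun _ => a) a.
Proof. intros eps He. exists 0%nat. intros. unfold Rdist. rewrite Rminus_diag, Rabs_R0. lra. Qed.

Lemma infinite_sum_scal (a : nat -> R) l k :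
  infinite_sum a l -> infinite_sum (fun n => k * a n) (k * l).
Proof.
  intros Ha. apply (Un_cv_ext (fun n => k * sum_f_R0 a n)).
  - intro n. rewrite scal_sum. apply sum_eq. intros; ring.
  - exact (CV_mult _ _ _ _ (Un_cv_const k) Ha).
Qed.

Lemma infinite_sum_le (a b : nat -> R) la lb :
  (forall n, a n <= b n) -> infinite_sum a la -> infinite_sum b lb -> la <= lb.
Proof.
  intros H Ha Hb. exact (Rle_cv_lim (fun n => sum_Rle a b n (fun k _ => H k)) Ha Hb).
Qed.

Lemma infinite_sum_term_le (a : nat -> R) k l :
  (forall n, 0 <= a n) -> infinite_sum a l -> a k <= l.
Proof.
  intros H Hl. apply Rle_trans with (sum_f_R0 a k); [|exact (sum_incr a k l Hl H)].
  destruct k; simpl; [lra|].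
  pose proof (cond_pos_sum a k H). lra.
Qed.

Lemma infinite_sum_dominated (a b : nat -> R) lb :
  (forall n, 0 <= a n <= b n) -> infinite_sum b lb ->
  exists la, infinite_sum a la /\ 0 <= la <= lb.
Proof.
  intros H Hb. destruct (Rseries_CV_comp a b H (exist _ lb Hb)) as [la Hla].
  exists la. split; [exact Hla|split].
  - apply Rle_trans with (a 0%nat); [apply H|].
    apply infinite_sum_term_le; [apply H|exact Hla].
  - apply (infinite_sum_le a b); auto. apply H.
Qed.

Lemma sum_f_R0_mono (a : nat -> R) N M :
  (forall n, 0 <= a n) -> (N <= M)%nat -> sum_f_R0 a N <= sum_f_R0 a M.
Proof. intros H HNM. induction HNM; simpl; [lra|]. pose proof (H (S m)). lra. Qed.

Lemma sum_f_R0_cv0 (a : nat -> nat -> R) M :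
  (forall k, Un_cv (fun n => a n k) 0) -> Un_cv (fun n => sum_f_R0 (a n) M) 0.
Proof.
  intros H. induction M; simpl; [apply H|].
  rewrite <- (Rplus_0_r 0). apply CV_plus; auto.
Qed.

Lemma Un_cv_S (u : nat -> R) l : Un_cv (fun n => u (S n)) l <-> Un_cv u l.
Proof.
  split; intro H.
  - apply (CV_shift u 1). apply (Un_cv_ext (fun n => u (S n))); auto.
    intro n. f_equal. lia.
  - apply (Un_cv_ext (fun n => u (n + 1)%nat)); [intro n; f_equal; lia|].
    exact (CV_shift' u 1 l H).
Qed.

Lemma Un_cv_squeeze (u v w : nat -> R) l :
  (forall n, u n <= v n <= w n) -> Un_cv u l -> Un_cv w l -> Un_cv v l.
Proof.
  intros H Hu Hw eps He. destruct (Hu eps He) as [N1 H1]. destruct (Hw eps He) as [N2 H2].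
  exists (max N1 N2). intros n Hn.
  specialize (H1 n ltac:(lia)). specialize (H2 n ltac:(lia)). specialize (H n).
  unfold Rdist in *. apply Rabs_def2 in H1, H2. apply Rabs_def1; lra.
Qed.

Lemma Un_cv0_squeeze (u v : nat -> R) : (forall n, 0 <= u n <= v n) -> Un_cv v 0 -> Un_cv u 0.
Proof. intros H. apply (Un_cv_squeeze (fun _ => 0)); [exact H|apply Un_cv_const]. Qed.

Section SeriesOverX.

Context {X : Type} (c : countable X).

Lemma seqX_ext (f g : X -> R) n : (forall w, f w = g w) -> seqX c f n = seqX c g n.
Proof. intro E. unfold seqX. destruct (decode c n); auto. Qed.

Lemma seqX_le (f g : X -> R) n : (forall w, f w <= g w) -> seqX c f n <= seqX c g n.
Proof. intro E. unfold seqX. destruct (decode c n); [auto|lra]. Qed.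

Lemma seqX_ge0 (f : X -> R) n : (forall w, 0 <= f w) -> 0 <= seqX c f n.
Proof. intro E. unfold seqX. destruct (decode c n); [auto|lra]. Qed.

Lemma sumX_is_sumX (f : X -> R) l : sumX_is c f l -> sumX c f = l.
Proof. apply tsum_infinite_sum. Qed.

Lemma sumX_is_ext (f g : X -> R) l : (forall w, f w = g w) -> sumX_is c f l -> sumX_is c g l.
Proof. intros E. apply infinite_sum_ext. intro. apply seqX_ext, E. Qed.

Lemma sumX_is_plus (f g : X -> R) lf lg :
  sumX_is c f lf -> sumX_is c g lg -> sumX_is c (fun w => f w + g w) (lf + lg).
Proof.
  intros Hf Hg. eapply infinite_sum_ext; [|exact (infinite_sum_plus _ _ _ _ Hf Hg)].
  intro n. unfold seqX. destruct (decode c n); lra.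
Qed.

Lemma sumX_is_scal (f : X -> R) l k : sumX_is c f l -> sumX_is c (fun w => k * f w) (k * l).
Proof.
  intros Hf. eapply infinite_sum_ext; [|exact (infinite_sum_scal _ _ k Hf)].
  intro n. unfold seqX. destruct (decode c n); lra.
Qed.

Lemma sumX_is_le (f g : X -> R) lf lg :
  (forall w, f w <= g w) -> sumX_is c f lf -> sumX_is c g lg -> lf <= lg.
Proof. intros H. apply infinite_sum_le. intro. apply seqX_le, H. Qed.

Lemma sumX_is_term_le (f : X -> R) l x : (forall w, 0 <= f w) -> sumX_is c f l -> f x <= l.
Proof.
  intros H Hl. replace (f x) with (seqX c f (code c x)) by (unfold seqX; now rewrite decode_code).
  apply infinite_sum_term_le; [|exact Hl]. intro. apply seqX_ge0, H.
Qed.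

Lemma sumX_is_dominated (f g : X -> R) lg :
  (forall w, 0 <= f w <= g w) -> sumX_is c g lg -> exists lf, sumX_is c f lf /\ 0 <= lf <= lg.
Proof.
  intros H. apply infinite_sum_dominated. intro n. split.
  - apply seqX_ge0. apply H.
  - apply seqX_le. apply H.
Qed.

End SeriesOverX.

Definition in_unit {X} (z : X -> R) : Prop := forall w, 0 <= z w <= 1.

Section Transition.

Context {X : Type} (c : countable X) (p : X -> X -> R) (Hp : stochastic c p).

Definition Papply (z : X -> R) (x : X) : R := sumX c (fun w => p x w * z w).

Lemma Papply_spec z x : in_unit z ->
  sumX_is c (fun w => p x w * z w) (Papply z x) /\ 0 <= Papply z x <= 1.
Proof.
  intros Hz. destruct Hp as [Hp0 Hp1].
  destruct (sumX_is_dominated c (fun w => p x w * z w) (p x) 1) as [l [Hl Hb]]; auto.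
  - intro w. destruct (Hz w). pose proof (Hp0 x w). nra.
  - unfold Papply. rewrite (sumX_is_sumX c _ l Hl). auto.
Qed.

Lemma Papply_unit z : in_unit z -> in_unit (Papply z).
Proof. intros Hz x. apply Papply_spec, Hz. Qed.

Lemma Papply_const a x : Papply (fun _ => a) x = a.
Proof.
  unfold Papply. apply sumX_is_sumX.
  pose proof (sumX_is_scal c _ _ a (proj2 Hp x)) as H. rewrite Rmult_1_r in H.
  eapply sumX_is_ext; [|exact H]. intro; simpl; ring.
Qed.

Lemma Papply_affine z a b x : in_unit z ->
  Papply (fun w => a + b * z w) x = a + b * Papply z x.
Proof.
  intros Hz. unfold Papply at 1. apply sumX_is_sumX.
  pose proof (sumX_is_plus c _ _ _ _ (sumX_is_scal c _ _ a (proj2 Hp x))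
                (sumX_is_scal c _ _ b (proj1 (Papply_spec z x Hz)))) as H.
  rewrite Rmult_1_r in H. eapply sumX_is_ext; [|exact H]. intro; simpl; ring.
Qed.

Lemma Papply_le z1 z2 : in_unit z1 -> in_unit z2 ->
  (forall w, z1 w <= z2 w) -> forall x, Papply z1 x <= Papply z2 x.
Proof.
  intros H1 H2 H x.
  apply (sumX_is_le c _ _ _ _ (fun w => Rmult_le_compat_l _ _ _ (proj1 Hp x w) (H w))).
  - apply Papply_spec, H1.
  - apply Papply_spec, H2.
Qed.

Lemma Papply_term_le z x w : in_unit z -> p x w * z w <= Papply z x.
Proof.
  intros Hz. apply (sumX_is_term_le c (fun w => p x w * z w)).
  - intro v. apply Rmult_le_pos; [apply Hp|apply Hz].
  - apply Papply_spec, Hz.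
Qed.

Lemma Papply_finsum (F : nat -> X -> R) n x : (forall k, in_unit (F k)) ->
  sumX_is c (fun w => p x w * sum_f_R0 (fun k => F k w) n) (sum_f_R0 (fun k => Papply (F k) x) n).
Proof.
  intros HF. induction n; simpl.
  - apply Papply_spec, HF.
  - eapply sumX_is_ext; [|exact (sumX_is_plus c _ _ _ _ IHn (proj1 (Papply_spec (F (S n)) x (HF (S n)))))].
    intro w. simpl. ring.
Qed.

Lemma Papply_partial_sum_bound z x M : in_unit z ->
  Papply z x <= sum_f_R0 (seqX c (fun w => p x w * z w)) M + (1 - sum_f_R0 (seqX c (p x)) M).
Proof.
  intros Hz.
  assert (Hz' : in_unit (fun w => 1 + -1 * z w)) by (intro w; specialize (Hz w); lra).
  destruct (Papply_spec _ x Hz') as [Hs _].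
  assert (Hpart : sum_f_R0 (seqX c (fun w => p x w * (1 + -1 * z w))) M
                  = sum_f_R0 (seqX c (p x)) M - sum_f_R0 (seqX c (fun w => p x w * z w)) M).
  { rewrite <- minus_sum. apply sum_eq. intros k _. unfold seqX. destruct (decode c k); ring. }
  pose proof (sum_incr _ M _ Hs (fun k => seqX_ge0 c _ k
                (fun w => Rmult_le_pos _ _ (proj1 Hp x w) (proj1 (Hz' w))))) as Hle.
  rewrite Hpart, Papply_affine in Hle by exact Hz. lra.
Qed.

Lemma Papply_dominated_cv0 (zs : nat -> X -> R) x :
  (forall n, in_unit (zs n)) -> (forall w, Un_cv (fun n => zs n w) 0) ->
  Un_cv (fun n => Papply (zs n) x) 0.
Proof.
  intros Hz Hc eps He.
  destruct (proj2 Hp x (eps / 2) ltac:(lra)) as [M HM].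
  specialize (HM M (le_n _)). unfold Rdist in HM. apply Rabs_def2 in HM.
  assert (Hfin : Un_cv (fun n => sum_f_R0 (seqX c (fun w => p x w * zs n w)) M) 0).
  { apply sum_f_R0_cv0. intro k. unfold seqX. destruct (decode c k) as [w|].
    - rewrite <- (Rmult_0_r (p x w)). apply CV_mult; [apply Un_cv_const|apply Hc].
    - apply Un_cv_const. }
  destruct (Hfin (eps / 2) ltac:(lra)) as [N HN]. exists N. intros n Hn.
  specialize (HN n Hn). unfold Rdist in HN |- *. rewrite Rminus_0_r in HN |- *.
  apply Rabs_def2 in HN.
  pose proof (Papply_partial_sum_bound (zs n) x M (Hz n)).
  pose proof (Papply_spec (zs n) x (Hz n)) as [_ H01].
  apply Rabs_def1; lra.
Qed.

End Transition.

Section GeneratingFunction.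

Context (rho : nat -> R) (Hrho : prob_nat rho).

Definition pgf (s : R) : R := tsum (fun k => rho k * s ^ k).

Lemma pow_unit s k : 0 <= s <= 1 -> 0 <= s ^ k <= 1.
Proof. intros Hs. rewrite <- (pow1 k). split; [apply pow_le|apply pow_incr]; lra. Qed.

Lemma pgf_spec s : 0 <= s <= 1 ->
  infinite_sum (fun k => rho k * s ^ k) (pgf s) /\ 0 <= pgf s <= 1.
Proof.
  intros Hs. destruct Hrho as [H0 H1].
  destruct (infinite_sum_dominated (fun k => rho k * s ^ k) rho 1) as [l [Hl Hb]]; auto.
  - intro n. pose proof (pow_unit s n Hs). pose proof (H0 n). nra.
  - unfold pgf. rewrite (tsum_infinite_sum _ l Hl). auto.
Qed.

Lemma pgf_le s t : 0 <= s -> s <= t -> t <= 1 -> pgf s <= pgf t.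
Proof.
  intros H1 H2 H3.
  apply (infinite_sum_le _ _ _ _
           (fun n => Rmult_le_compat_l _ _ _ (proj1 Hrho n) (pow_incr s t n (conj H1 H2)))).
  - apply pgf_spec. lra.
  - apply pgf_spec. lra.
Qed.

Lemma pow_chord_le v t k : 0 <= v <= 1 -> 0 <= t <= 1 ->
  ((1 - t) * v + t) ^ k <= (1 - t) * v ^ k + t.
Proof.
  intros Hv Ht. induction k; simpl; [lra|].
  pose proof (pow_unit v k Hv).
  apply Rle_trans with (((1 - t) * v + t) * ((1 - t) * v ^ k + t)).
  - apply Rmult_le_compat_l; nra.
  - assert (0 <= t * (1 - t) * ((1 - v) * (1 - v ^ k))).
    { apply Rmult_le_pos; [nra|]. apply Rmult_le_pos; lra. }
    nra.
Qed.

Lemma pgf_chord_le v t : 0 <= v <= 1 -> 0 <= t <= 1 ->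
  pgf ((1 - t) * v + t) <= (1 - t) * pgf v + t.
Proof.
  intros Hv Ht.
  pose proof (infinite_sum_plus _ _ _ _ (infinite_sum_scal _ _ (1 - t) (proj1 (pgf_spec v Hv)))
                (infinite_sum_scal _ _ t (proj2 Hrho))) as Hsum.
  rewrite Rmult_1_r in Hsum.
  refine (infinite_sum_le _ _ _ _ _ (proj1 (pgf_spec _ _)) Hsum); [|nra].
  intro n. pose proof (proj1 Hrho n). pose proof (pow_chord_le v t n Hv Ht).
  replace ((1 - t) * (rho n * v ^ n) + t * rho n) with (rho n * ((1 - t) * v ^ n + t)) by ring.
  apply Rmult_le_compat_l; auto.
Qed.

Fixpoint pgf_iter (n : nat) : R :=
  match n with O => 0 | S n' => pgf (pgf_iter n') end.

Lemma pgf_iter_unit n : 0 <= pgf_iter n <= 1.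
Proof. induction n; simpl; [lra|]. apply pgf_spec, IHn. Qed.

End GeneratingFunction.

Section Avoidance.

Context {X : Type} (c : countable X) (y : X).

Lemma eqX_refl x : eqX c x x = true.
Proof. apply Nat.eqb_refl. Qed.

Lemma eqX_eq x x' : eqX c x x' = true -> x = x'.
Proof.
  intro H. apply Nat.eqb_eq in H.
  assert (Some x = Some x') by (rewrite <- (decode_code c x), <- (decode_code c x'); congruence).
  congruence.
Qed.

Definition away (x : X) : R := if eqX c x y then 0 else 1.

Lemma away_unit x : 0 <= away x <= 1.
Proof. unfold away. destruct (eqX c x y); lra. Qed.

(* [avoid_iter F N n] has the recursion of [avoid] with [Gen c rho p] replaced by an
   arbitrary one-step operator [F]; [F := Papply c p] gives a single walker. *)
Fixpoint avoid_iter (F : (X -> R) -> X -> R) (N n : nat) : X -> R :=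
  match n with
  | O => match N with
         | O => away
         | S _ => fun _ => 1
         end
  | S n' => match N with
            | O => fun x => away x * F (avoid_iter F O n') x
            | S N' => F (avoid_iter F N' n')
            end
  end.

Lemma avoid_iter_at_target F n : avoid_iter F 0 n y = 0.
Proof. destruct n; simpl; unfold away; rewrite eqX_refl; ring. Qed.

Context (F : (X -> R) -> X -> R)
  (F_unit : forall z, in_unit z -> in_unit (F z))
  (F_le : forall z1 z2, in_unit z1 -> in_unit z2 -> (forall w, z1 w <= z2 w) ->
          forall x, F z1 x <= F z2 x).

Lemma avoid_iter_unit N n : in_unit (avoid_iter F N n).
Proof.
  revert N. induction n; intros [|N] x; simpl; try apply away_unit; try lra.
  - pose proof (away_unit x). pose proof (F_unit _ (IHn 0%nat) x). nra.
  - apply F_unit, IHn.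
Qed.

Lemma avoid_iter_decr N n x : avoid_iter F N (S n) x <= avoid_iter F N n x.
Proof.
  revert N x. induction n; intros [|N] x.
  - pose proof (F_unit _ (avoid_iter_unit 0 0) x). pose proof (away_unit x).
    simpl in *. nra.
  - exact (proj2 (F_unit _ (avoid_iter_unit N 0) x)).
  - apply Rmult_le_compat_l; [apply away_unit|].
    apply (F_le (avoid_iter F 0 (S n))); auto using avoid_iter_unit.
  - apply (F_le (avoid_iter F N (S n))); auto using avoid_iter_unit.
Qed.

End Avoidance.

Section BranchingBounds.

Context {X : Type} (c : countable X) (rho : nat -> R) (p : X -> X -> R)
  (Hrho : prob_nat rho) (Hp : stochastic c p).

Lemma Gen_unit z : in_unit z -> in_unit (Gen c rho p z).
Proof. intros Hz x. exact (proj2 (pgf_spec rho Hrho _ (Papply_unit c p Hp z Hz x))). Qed.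

Lemma Gen_le z1 z2 : in_unit z1 -> in_unit z2 ->
  (forall w, z1 w <= z2 w) -> forall x, Gen c rho p z1 x <= Gen c rho p z2 x.
Proof.
  intros H1 H2 H x. apply (pgf_le rho Hrho).
  - apply (Papply_unit c p Hp z1 H1 x).
  - apply (Papply_le c p Hp z1 z2 H1 H2 H).
  - apply (Papply_unit c p Hp z2 H2 x).
Qed.

Lemma ext_by_eq_pgf_iter n x : ext_by c rho p n x = pgf_iter rho n.
Proof.
  revert x. induction n; intro x; simpl; auto.
  change (pgf rho (Papply c p (ext_by c rho p n) x) = pgf rho (pgf_iter rho n)).
  replace (ext_by c rho p n) with (fun _ : X => pgf_iter rho n).
  - rewrite Papply_const; auto.
  - apply functional_extensionality. auto.
Qed.

Lemma avoid_eq_avoid_iter y N n : avoid c rho p y N n = avoid_iter c y (Gen c rho p) N n.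
Proof. revert N. induction n; intros [|N]; simpl; rewrite ?IHn; reflexivity. Qed.

Lemma pgf_iter_le_avoid_iter y N n x : pgf_iter rho N <= avoid_iter c y (Gen c rho p) N n x.
Proof.
  revert n x. induction N; intros n x.
  - apply (avoid_iter_unit c y _ Gen_unit).
  - destruct n; simpl; [exact (proj2 (pgf_iter_unit rho Hrho (S N)))|].
    change (pgf rho (pgf_iter rho N) <= Gen c rho p (avoid_iter c y (Gen c rho p) N n) x).
    rewrite <- (Papply_const c p Hp (pgf_iter rho N) x).
    apply Gen_le; auto using avoid_iter_unit, Gen_unit, Gen_le.
    intro. apply pgf_iter_unit, Hrho.
Qed.

(* Convexity of [pgf] with [pgf 1 = 1]: the chord to (1,1) lies above the graph. *)
Lemma pgf_Papply_chord_le z z' v x : 0 <= v <= 1 -> in_unit z -> in_unit z' ->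
  (forall w, z w <= v + (1 - v) * z' w) ->
  pgf rho (Papply c p z x) <= pgf rho v + (1 - pgf rho v) * Papply c p z' x.
Proof.
  intros Hv Hz Hz' Hzz'.
  set (t := Papply c p z' x).
  assert (Ht : 0 <= t <= 1) by apply (Papply_unit c p Hp z' Hz' x).
  assert (Hmix : in_unit (fun w => v + (1 - v) * z' w)) by (intro w; specialize (Hz' w); nra).
  apply Rle_trans with (pgf rho ((1 - t) * v + t)).
  - apply (pgf_le rho Hrho); [apply (Papply_unit c p Hp z Hz x)| |nra].
    replace ((1 - t) * v + t) with (v + (1 - v) * t) by ring.
    unfold t. rewrite <- Papply_affine by auto.
    apply Papply_le; auto.
  - pose proof (pgf_chord_le rho Hrho v t Hv Ht). lra.
Qed.

Lemma avoid_iter_le_walk y N n x :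
  avoid_iter c y (Gen c rho p) N n x
  <= pgf_iter rho n + (1 - pgf_iter rho n) * avoid_iter c y (Papply c p) N n x.
Proof.
  revert N x. induction n; intros N x; [destruct N; simpl; lra|].
  assert (Hstep : forall N', pgf rho (Papply c p (avoid_iter c y (Gen c rho p) N' n) x)
     <= pgf_iter rho (S n) + (1 - pgf_iter rho (S n)) * Papply c p (avoid_iter c y (Papply c p) N' n) x).
  { intro N'. apply pgf_Papply_chord_le.
    - apply pgf_iter_unit, Hrho.
    - apply (avoid_iter_unit c y _ Gen_unit).
    - apply (avoid_iter_unit c y _ (Papply_unit c p Hp)).
    - apply IHn. }
  destruct N; [|apply Hstep].
  specialize (Hstep 0%nat). pose proof (pgf_iter_unit rho Hrho (S n)).
  simpl avoid_iter. unfold away. destruct (eqX c x y); [lra|].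
  change (pgf rho (Papply c p (avoid_iter c y (Gen c rho p) 0 n) x)) with
    (Gen c rho p (avoid_iter c y (Gen c rho p) 0 n) x) in Hstep.
  lra.
Qed.

End BranchingBounds.

Section RecurrentWalk.

Context {X : Type} (c : countable X) (p : X -> X -> R) (Hp : stochastic c p) (y : X).

Local Notation walk := (avoid_iter c y (Papply c p)).

Lemma walk_unit N n : in_unit (walk N n).
Proof. exact (avoid_iter_unit c y _ (Papply_unit c p Hp) N n). Qed.

(* Probability that the walk started at [y] avoids [y] at times 1..m. *)
Definition escape_prob (m : nat) : R :=
  match m with O => 1 | S m' => Papply c p (walk 0 m') y end.

Lemma escape_prob_unit m : 0 <= escape_prob m <= 1.
Proof. destruct m; simpl; [lra|]. apply (Papply_unit c p Hp), walk_unit. Qed.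

Lemma escape_prob_decr m : escape_prob (S m) <= escape_prob m.
Proof.
  destruct m; [apply (escape_prob_unit 1)|].
  apply (Papply_le c p Hp); try apply walk_unit.
  intro. apply (avoid_iter_decr c y _ (Papply_unit c p Hp) (Papply_le c p Hp)).
Qed.

Lemma escape_prob_antitone j n : (j <= n)%nat -> escape_prob n <= escape_prob j.
Proof. induction 1; [lra|]. pose proof (escape_prob_decr m). lra. Qed.

Lemma pn_unit k x : 0 <= pn c p k x y <= 1.
Proof.
  revert x. induction k; intro x; simpl.
  - destruct (eqX c x y); lra.
  - exact (Papply_unit c p Hp (fun w => pn c p k w y) IHk x).
Qed.

(* Classify the walks from [x] by the last time [k <= n] at which they visit [y]. *)
Lemma last_visit_decomposition n x :
  walk 0 n x + sum_f_R0 (fun k => pn c p k x y * escape_prob (n - k)) n = 1.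
Proof.
  revert x. induction n; intro x.
  - simpl. unfold away. destruct (eqX c x y); lra.
  - rewrite decomp_sum by lia. simpl pred.
    set (F := fun k w => pn c p k w y * escape_prob (n - k)).
    assert (HF : forall k, in_unit (F k)).
    { intros k w. unfold F. pose proof (pn_unit k w). pose proof (escape_prob_unit (n - k)). nra. }
    assert (Hshift : sum_f_R0 (fun i => pn c p (S i) x y * escape_prob (S n - S i)) n
                     = sum_f_R0 (fun k => Papply c p (F k) x) n).
    { apply sum_eq. intros i _. unfold F.
      change (pn c p (S i) x y) with (Papply c p (fun w => pn c p i w y) x).
      change (S n - S i)%nat with (n - i)%nat.
      transitivity (0 + escape_prob (n - i) * Papply c p (fun w => pn c p i w y) x); [ring|].
      rewrite <- Papply_affine by (exact Hp || intro; apply pn_unit).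
      f_equal. apply functional_extensionality. intro. ring. }
    rewrite Hshift, <- (sumX_is_sumX c _ _ (Papply_finsum c p Hp F n x HF)).
    replace (fun w => p x w * sum_f_R0 (fun k => F k w) n)
      with (fun w => p x w * (1 + -1 * walk 0 n w))
      by (apply functional_extensionality; intro w; specialize (IHn w); unfold F; f_equal; lra).
    change (sumX c (fun w => p x w * (1 + -1 * walk 0 n w)))
      with (Papply c p (fun w => 1 + -1 * walk 0 n w) x).
    rewrite Papply_affine by (exact Hp || apply walk_unit).
    replace (S n - 0)%nat with (S n) by lia. simpl. unfold away.
    destruct (eqX c x y) eqn:E; [apply eqX_eq in E; subst|]; lra.
Qed.

Lemma escape_prob_mul_green_le n : escape_prob n * sum_f_R0 (fun k => pn c p k y y) n <= 1.
Proof.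
  rewrite <- (last_visit_decomposition n y), avoid_iter_at_target, Rplus_0_l, scal_sum.
  apply sum_Rle. intros k Hk.
  apply Rmult_le_compat_l; [apply pn_unit|]. apply escape_prob_antitone. lia.
Qed.

Lemma green_partial_sum_unbounded :
  ~ (exists l, infinite_sum (fun k => pn c p k y y) l) ->
  forall M, exists n, M < sum_f_R0 (fun k => pn c p k y y) n.
Proof.
  intros Hrec M. apply not_all_not_ex. intro Hbnd. apply Hrec.
  destruct (growing_cv (sum_f_R0 (fun k => pn c p k y y))) as [l Hl].
  - intro n. rewrite tech5. pose proof (pn_unit (S n) y). lra.
  - exists M. intros z [n ->]. apply Rnot_lt_le, Hbnd.
  - exists l. exact Hl.
Qed.

Lemma escape_prob_cv0 :
  ~ (exists l, infinite_sum (fun k => pn c p k y y) l) -> Un_cv escape_prob 0.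
Proof.
  intros Hrec eps He.
  destruct (green_partial_sum_unbounded Hrec (2 / eps)) as [n0 Hn0].
  exists n0. intros n Hn. unfold Rdist. rewrite Rminus_0_r.
  pose proof (escape_prob_unit n). rewrite Rabs_right by lra.
  assert (Hmono : sum_f_R0 (fun k => pn c p k y y) n0 <= sum_f_R0 (fun k => pn c p k y y) n)
    by (apply sum_f_R0_mono; [intro; apply pn_unit|exact Hn]).
  pose proof (escape_prob_mul_green_le n).
  assert (Hle : escape_prob n * (2 / eps) * eps <= 1 * eps)
    by (apply Rmult_le_compat_r; nra).
  replace (escape_prob n * (2 / eps) * eps) with (2 * escape_prob n) in Hle by (field; lra).
  lra.
Qed.

Lemma walk_cv0_of_Papply x :
  Un_cv (fun n => Papply c p (walk 0 n) x) 0 -> Un_cv (fun n => walk 0 n x) 0.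
Proof.
  intros H. apply Un_cv_S. refine (Un_cv0_squeeze _ _ _ H). intro n.
  pose proof (walk_unit 0 (S n) x). split; [lra|].
  pose proof (away_unit c y x). pose proof (Papply_unit c p Hp _ (walk_unit 0 n) x).
  simpl. nra.
Qed.

Lemma Papply_walk_cv0 x : ~ (exists l, infinite_sum (fun k => pn c p k y y) l) ->
  Un_cv (fun n => walk 0 n x) 0 -> Un_cv (fun n => Papply c p (walk 0 n) x) 0.
Proof.
  intros Hrec H. destruct (eqX c x y) eqn:E.
  - apply eqX_eq in E. subst x. apply (Un_cv_S escape_prob), escape_prob_cv0, Hrec.
  - apply (Un_cv_S (fun n => walk 0 n x)) in H. refine (Un_cv_ext _ _ _ 0 H).
    intro n. simpl. unfold away. rewrite E. ring.
Qed.

Lemma walk_cv0_along_edge x x' : 0 < p x x' ->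
  Un_cv (fun n => Papply c p (walk 0 n) x) 0 -> Un_cv (fun n => walk 0 n x') 0.
Proof.
  intros Hxx' H. apply (Un_cv0_squeeze _ (fun n => Papply c p (walk 0 n) x * / p x x')).
  - intro n. pose proof (walk_unit 0 n x'). split; [lra|].
    pose proof (Papply_term_le c p Hp (walk 0 n) x x' (walk_unit 0 n)).
    apply (Rmult_le_reg_l (p x x')); [exact Hxx'|]. field_simplify; lra.
  - rewrite <- (Rmult_0_l (/ p x x')). apply CV_mult; [exact H|apply Un_cv_const].
Qed.

Lemma walk_cv0 x : ~ (exists l, infinite_sum (fun k => pn c p k y y) l) ->
  clos_refl_trans X (fun u v => 0 < p u v) y x -> Un_cv (fun n => walk 0 n x) 0.
Proof.
  intros Hrec Hreach. apply walk_cv0_of_Papply, (Papply_walk_cv0 _ Hrec).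
  apply clos_rt_rtn1 in Hreach. induction Hreach as [|x0 x' Hedge _ IH].
  - apply (Un_cv_ext (fun _ => 0)); [intro n; symmetry; apply avoid_iter_at_target|].
    apply Un_cv_const.
  - apply (walk_cv0_along_edge x0 x' Hedge), (Papply_walk_cv0 _ Hrec), IH.
Qed.

Lemma walk_from_cv0 N x : ~ (exists l, infinite_sum (fun k => pn c p k y y) l) ->
  (forall x, clos_refl_trans X (fun u v => 0 < p u v) y x) ->
  Un_cv (fun n => walk N n x) 0.
Proof.
  intros Hrec Hreach. revert x. induction N; intro x; [apply walk_cv0; auto|].
  apply Un_cv_S. exact (Papply_dominated_cv0 c p Hp _ x (fun n => walk_unit N n) IHN).
Qed.

End RecurrentWalk.

Lemma irreducible_reachable {X : Type} (rho : nat -> R) (p : X -> X -> R) :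
  irreducible rho p -> forall x x', clos_refl_trans X (fun u v => 0 < p u v) x x'.
Proof.
  intros Hirr x x'. induction (Hirr x x') as [u v [Huv _]| |]; eauto using clos_refl_trans.
Qed.

Section LocalExtinction.

Context {X : Type} (c : countable X) (rho : nat -> R) (p : X -> X -> R)
  (Hrho : prob_nat rho) (Hp : stochastic c p) (y : X).

Lemma avoid_cv_exists N w : {l | Un_cv (fun n => avoid c rho p y N n w) l}.
Proof.
  apply decreasing_cv.
  - intro n. rewrite !avoid_eq_avoid_iter.
    apply (avoid_iter_decr c y _ (Gen_unit c rho p Hrho Hp) (Gen_le c rho p Hrho Hp)).
  - exists 0. intros z [n ->]. unfold opp_seq. rewrite avoid_eq_avoid_iter.
    pose proof (avoid_iter_unit c y _ (Gen_unit c rho p Hrho Hp) N n w). lra.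
Qed.

Lemma avoid_limit_bounds N w l L : Un_cv (pgf_iter rho) L ->
  Un_cv (fun n => avoid_iter c y (Papply c p) N n w) 0 ->
  Un_cv (fun n => avoid c rho p y N n w) l -> pgf_iter rho N <= l <= L.
Proof.
  intros Hv Hwalk Hl. split.
  - refine (Rle_cv_lim _ (Un_cv_const _) Hl). intro n. rewrite avoid_eq_avoid_iter.
    apply (pgf_iter_le_avoid_iter c rho p Hrho Hp).
  - assert (Hub : Un_cv (fun n => pgf_iter rho n + (1 - pgf_iter rho n)
                                    * avoid_iter c y (Papply c p) N n w) (L + (1 - L) * 0)).
    { apply CV_plus; [exact Hv|]. apply CV_mult; [|exact Hwalk].
      apply CV_minus; [apply Un_cv_const|exact Hv]. }
    rewrite Rmult_0_r, Rplus_0_r in Hub.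
    refine (Rle_cv_lim _ Hl Hub). intro n. rewrite avoid_eq_avoid_iter.
    apply (avoid_iter_le_walk c rho p Hrho Hp).
Qed.

End LocalExtinction.

Theorem mainTheorem9 (X : Type) (c : countable X) (rho : nat -> R) (p : X -> X -> R)
  (Hrho : prob_nat rho) (Hp : stochastic c p)
  (Hirr : irreducible rho p)
  (Hstd : exists k, k <> 1%nat /\ 0 < rho k)
  (Hrec : recurrent c p)
  (Hsurv : exists x, global_survival c rho p x) :
  forall w y : X, exists L, is_qbar c rho p w L /\ is_q c rho p w y L /\ L < 1.
Proof.
  intros w y. destruct Hsurv as [x0 [L [HL HL1]]].
  assert (Hext : forall x n, ext_by c rho p n x = pgf_iter rho n)
    by (intros; apply ext_by_eq_pgf_iter; assumption).
  assert (Hv : Un_cv (pgf_iter rho) L) by exact (Un_cv_ext _ _ (fun n => Hext x0 n) L HL).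
  exists L. split; [|split; [|exact HL1]].
  - exact (Un_cv_ext _ _ (fun n => eq_sym (Hext w n)) L Hv).
  - exists (fun N => proj1_sig (avoid_cv_exists c rho p Hrho Hp y N w)).
    split; [intro N; exact (proj2_sig (avoid_cv_exists c rho p Hrho Hp y N w))|].
    apply (Un_cv_squeeze (pgf_iter rho) _ (fun _ => L)); [|exact Hv|apply Un_cv_const].
    intro N. apply (avoid_limit_bounds c rho p Hrho Hp y N w _ L Hv).
    + apply (walk_from_cv0 c p Hp y N w (Hrec y)).
      apply (irreducible_reachable rho p Hirr y).
    + exact (proj2_sig (avoid_cv_exists c rho p Hrho Hp y N w)).
Qed.
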